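(* Let $(X,d)$ be a metric space (not necessarily complete) with $|X|\geqslant 3$, and let $T\colon X\to X$ satisfy: (i) $T$ has no periodic points of prime period $2$, i.e. $T(T(x))\neq x$ for every $x\in X$ with $Tx\neq x$; (ii) there exist $\alpha,\lambda\geqslant0$ with $2\alpha+\frac{3\lambda}{2}<1$ such that $$d(Tx,Ty)+d(Ty,Tz)+d(Tx,Tz)\leqslant \alpha\big(d(x,y)+d(y,z)+d(z,x)\big)+\lambda\big(d(x,Tx)+d(y,Ty)+d(z,Tz)\big)$$ for all pairwise distinct $x,y,z\in X$; (iii) $T$ is continuous at a point $x^*\in X$; (iv) there exists $x_0\in X$ such that the sequence of iterates $x_n=Tx_{n-1}$, $n=1,2,\dots$, has a subsequence $(x_{n_k})$ converging to $x^*$. Then $x^*$ is a fixed point of $T$, and $T$ has at most two fixed points. *)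

From Stdlib Require Import Reals.
Open Scope R_scope.

Definition is_metric {X : Type} (d : X -> X -> R) : Prop :=
  (forall x y, 0 <= d x y) /\
  (forall x y, d x y = 0 <-> x = y) /\
  (forall x y, d x y = d y x) /\
  (forall x y z, d x z <= d x y + d y z).

Fixpoint iter_T {X : Type} (T : X -> X) (x0 : X) (n : nat) : X :=
  match n with
  | O => x0
  | S m => T (iter_T T x0 m)
  end.

Definition continuous_at_metric {X : Type} (d : X -> X -> R) (T : X -> X) (p : X) : Prop :=
  forall eps, 0 < eps -> exists delta, 0 < delta /\
    forall x, d x p < delta -> d (T x) (T p) < eps.

Definition converges_to {X : Type} (d : X -> X -> R) (u : nat -> X) (l : X) : Prop :=
  forall eps, 0 < eps -> exists N : nat, forall n, (N <= n)%nat -> d (u n) l < eps.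

Definition strictly_increasing (phi : nat -> nat) : Prop :=
  forall k, (phi k < phi (S k))%nat.

(** Along an orbit with no 2-cycles, three consecutive distinct iterates form a
    genuine triangle, and the contraction condition shrinks the perimeter of
    the next triangle by the factor (α + λ)/(1 - λ/2) < 1: each side is at most
    half the perimeter, which absorbs the new displacement d(x_{n+2}, x_{n+3}).
    Hence d(x_n, x_{n+1}) → 0, and the cluster point x* is a limit of
    approximate fixed points at which T is continuous, so T x* = x*.  Three
    distinct fixed points would form a triangle whose perimeter is multiplied
    by α < 1 under T while staying the same. *)

From Stdlib Require Import Reals Lra Lia Classical.
Open Scope R_scope.

Lemma strictly_increasing_ge_id (phi : nat -> nat) :
  strictly_increasing phi -> forall k, (k <= phi k)%nat.
Proof.
  intros Hphi k; induction k as [|k IH]; [lia|].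
  specialize (Hphi k); lia.
Qed.

Lemma Un_cv_nonneg_0 (u : nat -> R) :
  (forall n, 0 <= u n) ->
  (forall eps, 0 < eps -> exists N, forall n, (N <= n)%nat -> u n < eps) ->
  Un_cv u 0.
Proof.
  intros Hu Hcv eps Heps.
  destruct (Hcv eps Heps) as [N HN].
  exists N; intros n Hn.
  unfold Rdist; rewrite Rminus_0_r, Rabs_right by (apply Rle_ge, Hu).
  apply HN; lia.
Qed.

Lemma Un_cv_eventually_0 (u : nat -> R) (N : nat) :
  (forall n, (N <= n)%nat -> u n = 0) -> Un_cv u 0.
Proof.
  intros Hu eps Heps; exists N; intros n Hn.
  rewrite Hu by lia; unfold Rdist; rewrite Rminus_0_r, Rabs_R0; lra.
Qed.

Lemma Un_cv_squeeze_0 (u v : nat -> R) :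
  (forall n, 0 <= v n <= u n) -> Un_cv u 0 -> Un_cv v 0.
Proof.
  intros Huv Hu eps Heps.
  destruct (Hu eps Heps) as [N HN]; exists N; intros n Hn.
  specialize (HN n Hn); specialize (Huv n).
  unfold Rdist in *; rewrite Rminus_0_r in *.
  rewrite Rabs_right in * by lra; lra.
Qed.

Lemma Un_cv_contracting_0 (u : nat -> R) (q : R) :
  0 <= q < 1 -> (forall n, 0 <= u n) -> (forall n, u (S n) <= q * u n) ->
  Un_cv u 0.
Proof.
  intros Hq Hu Hstep.
  assert (Hgeo : forall n, u n <= q ^ n * u O).
  { induction n as [|n IH]; simpl; [lra|].
    rewrite Rmult_assoc.
    apply (Rle_trans _ _ _ (Hstep n)), Rmult_le_compat_l; lra. }
  apply Un_cv_nonneg_0; [exact Hu|]; intros eps Heps.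
  assert (Hu0 := Hu O).
  destruct (pow_lt_1_zero q ltac:(rewrite Rabs_right; lra) (eps / (u O + 1)))
    as [N HN]; [apply Rdiv_lt_0_compat; lra|].
  exists N; intros n Hn.
  specialize (HN n Hn); rewrite Rabs_right in HN by (apply Rle_ge, pow_le; lra).
  assert (q ^ n * u O <= eps / (u O + 1) * u O) by (apply Rmult_le_compat_r; lra).
  assert (eps / (u O + 1) * u O < eps).
  { apply (Rmult_lt_reg_r (u O + 1)); [lra|]. field_simplify; lra. }
  specialize (Hgeo n); lra.
Qed.

Lemma Un_cv_subseq (u : nat -> R) (l : R) (phi : nat -> nat) :
  strictly_increasing phi -> Un_cv u l -> Un_cv (fun k => u (phi k)) l.
Proof.
  intros Hphi Hu eps Heps.
  destruct (Hu eps Heps) as [N HN]; exists N; intros k Hk.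
  apply HN; pose proof (strictly_increasing_ge_id phi Hphi k); lia.
Qed.

Section Metric.

Context {X : Type} (d : X -> X -> R).
Hypothesis Hd : is_metric d.

Lemma dist_ge0 x y : 0 <= d x y.
Proof. exact (proj1 Hd x y). Qed.

Lemma dist_eq0 x y : d x y = 0 <-> x = y.
Proof. exact (proj1 (proj2 Hd) x y). Qed.

Lemma dist_sym x y : d x y = d y x.
Proof. exact (proj1 (proj2 (proj2 Hd)) x y). Qed.

Lemma dist_triangle x y z : d x z <= d x y + d y z.
Proof. exact (proj2 (proj2 (proj2 Hd)) x y z). Qed.

Lemma dist_refl x : d x x = 0.
Proof. now apply dist_eq0. Qed.

Lemma dist_pos x y : x <> y -> 0 < d x y.
Proof.
  intros Hxy; destruct (Rle_lt_or_eq_dec _ _ (dist_ge0 x y)) as [|E]; [easy|].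
  now symmetry in E; apply dist_eq0 in E.
Qed.

Definition perimeter (x y z : X) : R := d x y + d y z + d x z.

Lemma perimeter_ge0 x y z : 0 <= perimeter x y z.
Proof.
  unfold perimeter; pose proof (dist_ge0 x y); pose proof (dist_ge0 y z);
  pose proof (dist_ge0 x z); lra.
Qed.

Lemma perimeter_pos x y z : x <> y -> 0 < perimeter x y z.
Proof.
  intros Hxy; unfold perimeter; pose proof (dist_pos x y Hxy);
  pose proof (dist_ge0 y z); pose proof (dist_ge0 x z); lra.
Qed.

Lemma dist_le_half_perimeter x y z : 2 * d y z <= perimeter x y z.
Proof.
  unfold perimeter; pose proof (dist_triangle y x z); rewrite (dist_sym y x) in *;
  lra.
Qed.

Lemma converges_to_fixed_point (T : X -> X) (y : nat -> X) (xstar : X) :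
  continuous_at_metric d T xstar ->
  converges_to d y xstar ->
  Un_cv (fun k => d (y k) (T (y k))) 0 ->
  T xstar = xstar.
Proof.
  intros Hcont Hy HyT.
  apply dist_eq0; rewrite dist_sym.
  destruct (Rle_lt_or_eq_dec _ _ (dist_ge0 xstar (T xstar))) as [HD|]; [|easy].
  exfalso; set (D := d xstar (T xstar)) in *.
  destruct (Hcont (D / 3) ltac:(lra)) as [delta [Hdelta HT]].
  destruct (Hy (Rmin (D / 3) delta) ltac:(apply Rmin_pos; lra)) as [N1 HN1].
  destruct (HyT (D / 3) ltac:(lra)) as [N2 HN2].
  set (k := Nat.max N1 N2).
  specialize (HN1 k ltac:(unfold k; lia)).
  specialize (HN2 k ltac:(unfold k; lia)).
  unfold Rdist in HN2; rewrite Rminus_0_r, Rabs_right in HN2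
    by apply Rle_ge, dist_ge0.
  pose proof (Rmin_l (D / 3) delta); pose proof (Rmin_r (D / 3) delta).
  specialize (HT (y k) ltac:(lra)).
  (* D <= d(x*, y_k) + d(y_k, T y_k) + d(T y_k, T x* ) < D/3 + D/3 + D/3 *)
  pose proof (dist_triangle xstar (y k) (T xstar)).
  pose proof (dist_triangle (y k) (T (y k)) (T xstar)).
  rewrite (dist_sym xstar (y k)) in *; unfold D in *; lra.
Qed.

Section TriangleContraction.

Variables (T : X -> X) (alpha lambda : R).
Hypothesis HT : forall x y z, x <> y -> y <> z -> x <> z ->
  perimeter (T x) (T y) (T z)
  <= alpha * perimeter x y z + lambda * (d x (T x) + d y (T y) + d z (T z)).

Lemma at_most_two_fixed_points :
  alpha < 1 ->
  forall p q r, T p = p -> T q = q -> T r = r -> p = q \/ q = r \/ p = r.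
Proof.
  intros Halpha p q r Hp Hq Hr.
  destruct (classic (p = q)) as [|Hpq]; [now left|].
  destruct (classic (q = r)) as [|Hqr]; [now right; left|].
  destruct (classic (p = r)) as [|Hpr]; [now right; right|].
  exfalso; specialize (HT p q r Hpq Hqr Hpr).
  rewrite Hp, Hq, Hr, !dist_refl in HT.
  pose proof (perimeter_pos p q r Hpq).
  assert (alpha * perimeter p q r < 1 * perimeter p q r)
    by (apply Rmult_lt_compat_r; lra).
  lra.
Qed.

Hypothesis no_2_cycles : forall x, T x <> x -> T (T x) <> x.

Variable x0 : X.
Local Notation x := (iter_T T x0).

Lemma orbit_stationary N : T (x N) = x N -> forall n, (N <= n)%nat -> x n = x N.
Proof.
  intros HN n Hn; induction Hn as [|n Hn IH]; [reflexivity|].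
  simpl; rewrite IH; exact HN.
Qed.

Lemma orbit_perimeter_step n :
  0 <= lambda -> x (S n) <> x n -> x (S (S n)) <> x (S n) ->
  (1 - lambda / 2) * perimeter (x (S n)) (x (S (S n))) (x (S (S (S n))))
  <= (alpha + lambda) * perimeter (x n) (x (S n)) (x (S (S n))).
Proof.
  intros Hlambda H01 H12.
  assert (H02 : x (S (S n)) <> x n) by now apply no_2_cycles.
  specialize (HT (x n) (x (S n)) (x (S (S n)))
    (not_eq_sym H01) (not_eq_sym H12) (not_eq_sym H02)).
  change (T (x n)) with (x (S n)) in HT.
  change (T (x (S n))) with (x (S (S n))) in HT.
  change (T (x (S (S n)))) with (x (S (S (S n)))) in HT.
  pose proof (dist_le_half_perimeter (x (S n)) (x (S (S n))) (x (S (S (S n))))).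
  pose proof (dist_ge0 (x n) (x (S (S n)))).
  assert (lambda * (d (x n) (x (S n)) + d (x (S n)) (x (S (S n)))
                    + d (x (S (S n))) (x (S (S (S n)))))
          <= lambda * (perimeter (x n) (x (S n)) (x (S (S n)))
                       + perimeter (x (S n)) (x (S (S n))) (x (S (S (S n)))) / 2)).
  { apply Rmult_le_compat_l; [lra|]; unfold perimeter in *; lra. }
  lra.
Qed.

Lemma orbit_asymptotically_regular :
  0 <= alpha -> 0 <= lambda -> alpha + 3 * lambda / 2 < 1 ->
  Un_cv (fun n => d (x n) (x (S n))) 0.
Proof.
  intros Halpha Hlambda Hal.
  destruct (classic (exists N, x (S N) = x N)) as [[N HN]|Hmoving].
  - apply (Un_cv_eventually_0 _ N); intros n Hn.
    rewrite (orbit_stationary N HN n), (orbit_stationary N HN (S n)) by lia.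
    apply dist_refl.
  - assert (Hne : forall n, x (S n) <> x n) by (intros n E; apply Hmoving; now exists n).
    set (q := (alpha + lambda) / (1 - lambda / 2)).
    apply (Un_cv_squeeze_0 (fun n => perimeter (x n) (x (S n)) (x (S (S n))))).
    { intros n; split; [apply dist_ge0|].
      unfold perimeter; pose proof (dist_ge0 (x (S n)) (x (S (S n))));
      pose proof (dist_ge0 (x n) (x (S (S n)))); lra. }
    apply (Un_cv_contracting_0 _ q).
    + split; unfold q.
      * apply Rmult_le_pos; [lra|]; left; apply Rinv_0_lt_compat; lra.
      * apply (Rmult_lt_reg_r (1 - lambda / 2)); [lra|]; field_simplify; lra.
    + intros n; apply perimeter_ge0.
    + intros n; apply (Rmult_le_reg_l (1 - lambda / 2)); [lra|].
      unfold q; rewrite <- Rmult_assoc, Rmult_div_assoc, Rmult_div_r by lra.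
      now apply orbit_perimeter_step.
Qed.

End TriangleContraction.

End Metric.

Theorem theorem5p1 (X : Type) (d : X -> X -> R) (T : X -> X)
  (alpha lambda : R) (xstar x0 : X) :
  is_metric d ->
  (exists a b c : X, a <> b /\ b <> c /\ a <> c) ->
  (forall x, T x <> x -> T (T x) <> x) ->
  0 <= alpha -> 0 <= lambda -> 2 * alpha + 3 * lambda / 2 < 1 ->
  (forall x y z, x <> y -> y <> z -> x <> z ->
     d (T x) (T y) + d (T y) (T z) + d (T x) (T z)
     <= alpha * (d x y + d y z + d z x)
        + lambda * (d x (T x) + d y (T y) + d z (T z))) ->
  continuous_at_metric d T xstar ->
  (exists phi : nat -> nat, strictly_increasing phi /\
     converges_to d (fun k => iter_T T x0 (phi k)) xstar) ->
  T xstar = xstar /\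
  (forall p q r : X, T p = p -> T q = q -> T r = r ->
     p = q \/ q = r \/ p = r).
Proof.
  intros Hd _ Hno2 Halpha Hlambda Hal Hcontr Hcont [phi [Hphi Hconv]].
  assert (HT : forall x y z, x <> y -> y <> z -> x <> z ->
    perimeter d (T x) (T y) (T z)
    <= alpha * perimeter d x y z + lambda * (d x (T x) + d y (T y) + d z (T z))).
  { intros x y z Hxy Hyz Hxz; unfold perimeter.
    rewrite (dist_sym d Hd x z); now apply Hcontr. }
  split.
  - apply (converges_to_fixed_point d Hd T _ xstar Hcont Hconv).
    apply (Un_cv_subseq (fun n => d (iter_T T x0 n) (iter_T T x0 (S n))) 0 phi Hphi).
    apply (orbit_asymptotically_regular d Hd T alpha lambda HT Hno2); lra.
  - apply (at_most_two_fixed_points d Hd T alpha lambda HT); lra.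
Qed.
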